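(* Let $\varepsilon$ be a centered Gaussian process on $\mathbb{R}^d$ with unit variance and correlation function $\rho$, let $Y(x)=(2\pi)^{1/2}\varepsilon(x)$, and for a tuple $y=(y_1,\ldots,y_n)\in(\mathbb{R}^d)^n$ with positive definite covariance matrix $\Sigma_y$ of $\varepsilon(y)$, let $\lambda_y$ be the density of $\Lambda_y(A)=\int_0^\infty\Pr\{\zeta Y(y)\in A\}\zeta^{-2}d\zeta$, $A\subset\mathbb{R}^n$ Borel, namely $\lambda_y(w)=\pi^{-(n-1)/2}|\Sigma_y|^{-1/2}(w^T\Sigma_y^{-1}w)^{-(n+1)/2}\Gamma((n+1)/2)$. Let $m,k\ge1$, $s\in(\mathbb{R}^d)^m$, $x\in(\mathbb{R}^d)^k$ such that the covariance matrix $$\Sigma_{(s,x)}=\begin{bmatrix}\Sigma_s&\Sigma_{s:x}\\ \Sigma_{x:s}&\Sigma_x\end{bmatrix}$$ of $(\varepsilon(s),\varepsilon(x))$ is positive definite. Then for all $u\in\mathbb{R}^m$ and $z\in\mathbb{R}^k\setminus\{0\}$, the conditional intensity function $\lambda_{s\mid x,z}(u)=\lambda_{(s,x)}(u,z)/\lambda_x(z)$ is the density of a multivariate Student distribution with $k+1$ degrees of freedom, location $\mu=\Sigma_{s:x}\Sigma_x^{-1}z$ and scale matrix $\tilde\Sigma=\frac{a_x(z)}{k+1}(\Sigma_s-\Sigma_{s:x}\Sigma_x^{-1}\Sigma_{x:s})$, where $a_x(z)=z^T\Sigma_x^{-1}z$; that is, $$\lambda_{s\mid x,z}(u)=\pi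^{-m/2}(k+1)^{-m/2}|\tilde\Sigma|^{-1/2}\left\{1+\frac{(u-\mu)^T\tilde\Sigma^{-1}(u-\mu)}{k+1}\right\}^{-(m+k+1)/2}\frac{\Gamma\left(\frac{m+k+1}{2}\right)}{\Gamma\left(\frac{k+1}{2}\right)}.$$
   Context: This is the Schlather max-stable model, represented with $Y=(2\pi)^{1/2}\varepsilon$ and $\{\zeta_i\}$ a Poisson process on $(0,\infty)$ with intensity $\zeta^{-2}d\zeta$. For tuples, $\varepsilon(y)$ denotes the vector of values at the points of $y$; $(s,x)$ denotes the concatenated tuple and $(u,z)$ the concatenated vector; $\Sigma_{s:x}$ is the cross-covariance matrix between $\varepsilon(s)$ and $\varepsilon(x)$ and $\Sigma_{x:s}=\Sigma_{s:x}^T$. *)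

From HB Require Import structures.
From mathcomp Require Import all_boot all_order all_algebra.
From mathcomp Require Import all_classical all_reals all_analysis.
Set Implicit Arguments. Unset Strict Implicit. Unset Printing Implicit Defensive.
Import Order.TTheory GRing.Theory Num.Theory.
Local Open Scope ring_scope.
Local Open Scope classical_set_scope.

Section Defs.
Variable R : realType.

Definition Gamma (a : R) : R :=
  Rintegral lebesgue_measure `]0%R, +oo[%classic
    (fun t : R => t `^ (a - 1) * expR (- t)).

Definition posdef n (A : 'M[R]_n) : Prop :=
  A^T = A /\ forall v : 'rV[R]_n, v != 0 -> 0 < (v *m A *m v^T) 0 0.

Definition qform n (A : 'M[R]_n) (w : 'rV[R]_n) : R := (w *m A *m w^T) 0 0.

Definition covmx d n (rho : 'rV[R]_d -> 'rV[R]_d -> R) (y : 'I_n -> 'rV[R]_d)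
  : 'M[R]_n := \matrix_(i, j) rho (y i) (y j).

Definition crosscov d m k (rho : 'rV[R]_d -> 'rV[R]_d -> R)
  (s : 'I_m -> 'rV[R]_d) (x : 'I_k -> 'rV[R]_d) : 'M[R]_(m, k) :=
  \matrix_(i, j) rho (s i) (x j).

Definition cat_pts d m k (s : 'I_m -> 'rV[R]_d) (x : 'I_k -> 'rV[R]_d)
  : 'I_(m + k) -> 'rV[R]_d :=
  fun i => match fintype.split i with inl a => s a | inr b => x b end.

Definition lambda_dens n (Sigma : 'M[R]_n) (w : 'rV[R]_n) : R :=
  pi `^ (- ((n%:R - 1) / 2)) * (\det Sigma) `^ (- (1 / 2))
  * (qform (invmx Sigma) w) `^ (- ((n%:R + 1) / 2)) * Gamma ((n%:R + 1) / 2).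

Definition lambda d n (rho : 'rV[R]_d -> 'rV[R]_d -> R) (y : 'I_n -> 'rV[R]_d)
  (w : 'rV[R]_n) : R := lambda_dens (covmx rho y) w.

Definition student_dens m (nu : R) (mu : 'rV[R]_m) (S : 'M[R]_m) (u : 'rV[R]_m) : R :=
  pi `^ (- (m%:R / 2)) * nu `^ (- (m%:R / 2)) * (\det S) `^ (- (1 / 2))
  * (1 + qform (invmx S) (u - mu) / nu) `^ (- ((m%:R + nu) / 2))
  * Gamma ((m%:R + nu) / 2) / Gamma (nu / 2).

End Defs.

From HB Require Import structures.
From mathcomp Require Import all_boot all_order all_algebra.
From mathcomp Require Import all_classical all_reals all_analysis.
From mathcomp Require Import ring lra.
Import Order.TTheory GRing.Theory Num.Theory.
Local Open Scope ring_scope.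
Set Implicit Arguments. Unset Strict Implicit. Unset Printing Implicit Defensive.

(* The covariance matrix M of (eps(s), eps(x)) has the block form [[A, B], [B^T, D]],
   and the congruence by [[1, -B D^-1], [0, 1]] block-diagonalises it into the Schur
   complement C = A - B D^-1 B^T and D.  Hence det M = det C * det D and
   (u, z) M^-1 (u, z)^T = (u - mu) C^-1 (u - mu)^T + z D^-1 z^T with mu = z (B D^-1)^T.
   Writing a = z D^-1 z^T, the exponent-measure density of (u, z) is thus a power of
   a + (u - mu) C^-1 (u - mu)^T = a (1 + (u - mu) ((a / nu) C)^-1 (u - mu)^T / nu),
   and dividing by the density of z leaves exactly the Student density with nu = k + 1
   degrees of freedom and scale (a / nu) C. *)

Section QuadraticForms.
Variable R : realType.

Lemma mulmx1_invmx n (A B : 'M[R]_n) : A *m B = 1%:M -> invmx A = B.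
Proof.
move=> AB; have [uA _] := mulmx1_unit AB.
by rewrite -[invmx A]mulmx1 -AB mulmxA mulVmx // mul1mx.
Qed.

Lemma qformZ n (c : R) (A : 'M[R]_n) v : qform (c *: A) v = c * qform A v.
Proof. by rewrite /qform -scalemxAr -scalemxAl mxE. Qed.

Lemma qform_congr n (P A : 'M[R]_n) w :
  qform (P^T *m A *m P) w = qform A (w *m P^T).
Proof. by rewrite /qform trmx_mul trmxK !mulmxA. Qed.

Lemma qform_block_diag n1 n2 (A : 'M[R]_n1) (D : 'M[R]_n2) p q :
  qform (block_mx A 0 0 D) (row_mx p q) = qform A p + qform D q.
Proof.
by rewrite /qform mul_row_block !mulmx0 addr0 add0r tr_row_mx mul_row_col mxE.
Qed.

Lemma qform_row_mx0 n1 n2 (A : 'M[R]_n1) B C (D : 'M[R]_n2) v :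
  qform (block_mx A B C D) (row_mx v 0) = qform A v.
Proof.
rewrite /qform mul_row_block !mul0mx !addr0 tr_row_mx mul_row_col trmx0.
by rewrite mulmx0 addr0.
Qed.

Lemma qform_row0mx n1 n2 (A : 'M[R]_n1) B C (D : 'M[R]_n2) v :
  qform (block_mx A B C D) (row_mx 0 v) = qform D v.
Proof.
rewrite /qform mul_row_block !mul0mx !add0r tr_row_mx mul_row_col trmx0.
by rewrite mulmx0 add0r.
Qed.

End QuadraticForms.

Section PositiveDefinite.
Variable R : realType.

Lemma posdef_qform_ge0 n (A : 'M[R]_n) v : posdef A -> 0 <= qform A v.
Proof.
case=> _ hA; have [->|v0] := eqVneq v 0; first by rewrite /qform !mul0mx mxE.
exact/ltW/hA.
Qed.

Lemma posdef_block_ul n1 n2 (A : 'M[R]_n1) B C (D : 'M[R]_n2) :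
  posdef (block_mx A B C D) -> posdef A.
Proof.
case=> hs hp; split; first by move: hs; rewrite tr_block_mx => /eq_block_mx[].
move=> v v0; have := hp (row_mx v 0); rewrite -/(qform _ _) qform_row_mx0; apply.
by rewrite -row_mx0; apply: contra v0 => /eqP/eq_row_mx[-> _].
Qed.

Lemma posdef_block_dr n1 n2 (A : 'M[R]_n1) B C (D : 'M[R]_n2) :
  posdef (block_mx A B C D) -> posdef D.
Proof.
case=> hs hp; split; first by move: hs; rewrite tr_block_mx => /eq_block_mx[].
move=> v v0; have := hp (row_mx 0 v); rewrite -/(qform _ _) qform_row0mx; apply.
by rewrite -row_mx0; apply: contra v0 => /eqP/eq_row_mx[_ ->].
Qed.

Lemma posdef_congr n (U N : 'M[R]_n) :
  U \in unitmx -> N^T = N -> posdef (U *m N *m U^T) -> posdef N.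
Proof.
move=> uU hs [_ hp]; split => // v v0.
have <- : qform (U *m N *m U^T) (v *m invmx U) = (v *m N *m v^T) 0 0.
  by rewrite /qform !mulmxA mulmxKV // -mulmxA -trmx_mul mulmxKV.
apply: hp; apply: contra v0 => /eqP h.
by rewrite -(mulmxKV uU v) h mul0mx.
Qed.

Lemma posdef_invmx n (A : 'M[R]_n) :
  A \in unitmx -> posdef A -> posdef (invmx A).
Proof.
move=> uA [hs hp]; split; first by rewrite trmx_inv hs.
move=> v v0.
have <- : qform A (v *m invmx A) = (v *m invmx A *m v^T) 0 0.
  by rewrite /qform mulmxKV // trmx_mul trmx_inv hs mulmxA.
apply: hp; apply: contra v0 => /eqP h.
by rewrite -(mulmxKV uA v) h mul0mx.
Qed.

End PositiveDefinite.

Section SchurComplement.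
Variable R : realType.

Definition schur_compl n1 n2 (A : 'M[R]_n1) (B : 'M[R]_(n1, n2)) (D : 'M[R]_n2) :=
  A - B *m invmx D *m B^T.

Lemma det_unitriangular n1 n2 (X : 'M[R]_(n1, n2)) :
  \det (block_mx 1%:M X 0 1%:M) = 1.
Proof. by rewrite det_ublock !det1 mulr1. Qed.

Lemma block_mx_schurE n1 n2 (A : 'M[R]_n1) (B : 'M[R]_(n1, n2)) (D : 'M[R]_n2) :
  D \in unitmx -> D^T = D ->
  let U := block_mx 1%:M (B *m invmx D) 0 1%:M in
  block_mx A B B^T D = U *m block_mx (schur_compl A B D) 0 0 D *m U^T.
Proof.
move=> uD hs U; rewrite /U /schur_compl tr_block_mx trmx0 !trmx1 trmx_mul trmx_inv hs.
rewrite mulmx_block !(mulmx0, mul0mx, mul1mx, addr0, add0r) mulmxKV //.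
rewrite mulmx_block !(mulmx0, mul0mx, mul1mx, mulmx1, addr0, add0r).
by rewrite [B *m (_ *m _)]mulmxA subrK mulKVmx.
Qed.

Section PosdefBlock.
Variables (n1 n2 : nat) (A : 'M[R]_n1) (B : 'M[R]_(n1, n2)) (D : 'M[R]_n2).
Hypotheses (hM : posdef (block_mx A B B^T D)) (uD : D \in unitmx).

Lemma posdef_schur_compl : posdef (schur_compl A B D).
Proof.
have [hAs _] := posdef_block_ul hM; have [hDs _] := posdef_block_dr hM.
have uU : block_mx 1%:M (B *m invmx D) 0 1%:M \in unitmx.
  by rewrite unitmxE det_unitriangular unitr1.
apply: (posdef_block_ul (B := 0) (C := 0) (D := D)).
apply: posdef_congr uU _ _.
  rewrite tr_block_mx !trmx0 hDs /schur_compl raddfB /= hAs !trmx_mul trmxK.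
  by rewrite trmx_inv hDs mulmxA.
by rewrite -block_mx_schurE //; case: (posdef_block_dr hM).
Qed.

Lemma det_block_schur :
  \det (block_mx A B B^T D) = \det (schur_compl A B D) * \det D.
Proof.
have [hDs _] := posdef_block_dr hM.
rewrite block_mx_schurE // !det_mulmx det_tr det_unitriangular det_ublock.
by rewrite mul1r mulr1.
Qed.

End PosdefBlock.

Lemma det_posdef_gt0 n (A : 'M[R]_n) : posdef A -> 0 < \det A.
Proof.
elim: n A => [|n IH] A hA; first by rewrite det_mx00.
pose A' : 'M[R]_(1 + n) := A.
have eA : A' = block_mx (ulsubmx A') (ursubmx A') (dlsubmx A') (drsubmx A').
  by rewrite submxK.
move: (ulsubmx A') (ursubmx A') (dlsubmx A') (drsubmx A') eA => a b c D eA.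
have ec : c = b^T.
  have hs : A'^T = A' := hA.1.
  by move: hs; rewrite eA tr_block_mx => /eq_block_mx[_ _ -> _].
have hM : posdef (block_mx a b b^T D) by rewrite -ec -eA.
have dD := IH _ (posdef_block_dr hM).
have uD : D \in unitmx by rewrite unitmxE unitfE gt_eqF.
change (0 < \det A'); rewrite eA ec det_block_schur // mulr_gt0 // det_mx11.
have [_ hS] := posdef_schur_compl hM uD.
by have := hS 1%:M (oner_neq0 _); rewrite mul1mx trmx1 mulmx1.
Qed.

Lemma posdef_unitmx n (A : 'M[R]_n) : posdef A -> A \in unitmx.
Proof. by move=> hA; rewrite unitmxE unitfE gt_eqF // det_posdef_gt0. Qed.

Lemma qform_invmx_block n1 n2 (A : 'M[R]_n1) (B : 'M[R]_(n1, n2)) (D : 'M[R]_n2) u z :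
  posdef (block_mx A B B^T D) ->
  qform (invmx (block_mx A B B^T D)) (row_mx u z) =
  qform (invmx (schur_compl A B D)) (u - z *m (B *m invmx D)^T) + qform (invmx D) z.
Proof.
move=> hM; have hD := posdef_block_dr hM; have uD := posdef_unitmx hD.
have uC := posdef_unitmx (posdef_schur_compl hM uD).
set U := block_mx 1%:M (B *m invmx D) 0 1%:M.
set V := block_mx 1%:M (- (B *m invmx D)) 0 1%:M.
set N := block_mx (schur_compl A B D) 0 0 D.
have UV : U *m V = 1%:M.
  rewrite mulmx_block !(mulmx0, mul0mx, mul1mx, mulmx1, addr0, add0r).
  by rewrite addNr -scalar_mx_block.
have uN : N \in unitmx by rewrite unitmxE det_ublock unitrM -!unitmxE uC uD.
have -> : invmx (block_mx A B B^T D) = V^T *m invmx N *m V.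
  apply: mulmx1_invmx; rewrite (block_mx_schurE A B uD hD.1) -/U -/N.
  rewrite -!mulmxA [U^T *m _]mulmxA -trmx_mul (mulmx1C UV) trmx1 mul1mx.
  by rewrite mulKVmx.
rewrite qform_congr; have -> : row_mx u z *m V^T = row_mx (u - z *m (B *m invmx D)^T) z.
  rewrite /V tr_block_mx !trmx1 trmx0 mul_row_block.
  by rewrite !(mulmx1, mulmx0, addr0, add0r) linearN /= mulmxN.
by rewrite /N invmx_block_diag // qform_block_diag.
Qed.

End SchurComplement.

Section ConditionalDensity.
Variable R : realType.

Lemma powR_student_ratio (m : nat) (r a b c e : R) :
  let nu := r + 1 in
  0 < nu -> 0 < a -> 0 <= b -> 0 < c -> 0 < e ->
  pi `^ (- ((m%:R + r - 1) / 2)) * (c * e) `^ (- (1 / 2))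
    * (b + a) `^ (- ((m%:R + r + 1) / 2)) * Gamma ((m%:R + r + 1) / 2)
  / (pi `^ (- ((r - 1) / 2)) * e `^ (- (1 / 2)) * a `^ (- (nu / 2)) * Gamma (nu / 2))
  = pi `^ (- (m%:R / 2)) * nu `^ (- (m%:R / 2)) * ((a / nu) ^+ m * c) `^ (- (1 / 2))
    * (1 + (a / nu)^-1 * b / nu) `^ (- ((m%:R + nu) / 2))
    * Gamma ((m%:R + nu) / 2) / Gamma (nu / 2).
Proof.
move=> nu nu0 a0 b0 c0 e0.
have pi0 : pi != 0 :> R by rewrite gt_eqF // pi_gt0.
set q := 1 + (a / nu)^-1 * b / nu.
have q0 : 0 < q.
  by rewrite /q ltr_pwDl // !mulr_ge0 // ?invr_ge0 ?ltW // divr_gt0.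
have split_pi : pi `^ (- ((m%:R + r - 1) / 2)) =
    pi `^ (- (m%:R / 2)) * pi `^ (- ((r - 1) / 2)).
  by rewrite -powRD ?pi0 ?implybT //; congr (pi `^ _); lra.
have split_quad : (b + a) `^ (- ((m%:R + r + 1) / 2)) =
    q `^ (- ((m%:R + nu) / 2)) * a `^ (- (m%:R / 2)) * a `^ (- (nu / 2)).
  have -> : b + a = q * a by rewrite /q; field; rewrite !gt_eqF.
  rewrite powRM ?ltW // -mulrA -powRD ?(gt_eqF a0) ?implybT //.
  by rewrite /nu; congr (q `^ _ * a `^ _); lra.
have split_det : ((a / nu) ^+ m * c) `^ (- (1 / 2)) =
    a `^ (- (m%:R / 2)) * (nu `^ (- (m%:R / 2)))^-1 * c `^ (- (1 / 2)).
  rewrite powRM ?exprn_ge0 ?divr_ge0 ?ltW // -powR_mulrn ?divr_ge0 ?ltW //.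
  rewrite -powRrM powRM ?invr_ge0 ?ltW // -(powR_inv1 (ltW nu0)) -powRrM -powRN.
  by congr (a `^ _ * nu `^ _ * _); lra.
have pow_ne0 (x y : R) : 0 < x -> x `^ y != 0 by move=> x0; rewrite gt_eqF ?powR_gt0.
rewrite split_pi split_quad split_det powRM ?ltW // -addrA -/nu invfM.
move: (pow_ne0 _ (- ((r - 1) / 2)) (pi_gt0 R)) (pow_ne0 _ (- (1 / 2)) e0).
move: (pow_ne0 _ (- (nu / 2)) a0) (pow_ne0 _ (- (m%:R / 2)) nu0).
(* [Gamma (nu / 2)] occurs inverted on both sides, so it need not be known nonzero. *)
move: (pi `^ _) (e `^ _) (a `^ (- (nu / 2))) (nu `^ _) (Gamma (nu / 2))^-1.
by move=> P E A N g P0 E0 A0 N0; field; rewrite P0 E0 A0 N0.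
Qed.

Lemma lambda_dens_block_ratio n1 n2 (A : 'M[R]_n1) (B : 'M[R]_(n1, n2))
    (D : 'M[R]_n2) u z :
  posdef (block_mx A B B^T D) -> z != 0 ->
  let nu := n2%:R + 1 in
  lambda_dens (block_mx A B B^T D) (row_mx u z) / lambda_dens D z =
  student_dens nu (z *m (B *m invmx D)^T)
    ((qform (invmx D) z / nu) *: schur_compl A B D) u.
Proof.
move=> hM z0 nu.
have hD := posdef_block_dr hM; have uD := posdef_unitmx hD.
have hC := posdef_schur_compl hM uD; have uC := posdef_unitmx hC.
have a_gt0 : 0 < qform (invmx D) z := (posdef_invmx uD hD).2 z z0.
have nu_gt0 : 0 < nu by rewrite ltr_pwDr.
rewrite /lambda_dens /student_dens invmxZ ?unitmxZ ?unitfE ?gt_eqF ?divr_gt0 //.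
rewrite detZ qformZ det_block_schur // qform_invmx_block // natrD /nu.
exact: (powR_student_ratio _ nu_gt0 a_gt0 (posdef_qform_ge0 _ (posdef_invmx uC hC))
  (det_posdef_gt0 hC) (det_posdef_gt0 hD)).
Qed.

End ConditionalDensity.

Lemma covmx_cat_pts (R : realType) d m k (rho : 'rV[R]_d -> 'rV[R]_d -> R)
    (s : 'I_m -> 'rV[R]_d) (x : 'I_k -> 'rV[R]_d) :
  (forall a b, rho a b = rho b a) ->
  covmx rho (cat_pts s x) =
  block_mx (covmx rho s) (crosscov rho s x) (crosscov rho s x)^T (covmx rho x).
Proof.
move=> rho_sym; apply/matrixP => i j; rewrite !mxE /cat_pts.
by case: (fintype.split i) => a; rewrite !mxE;
  case: (fintype.split j) => b; rewrite !mxE // rho_sym.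
Qed.

Theorem mainTheorem4 (R : realType) (d m k : nat)
  (rho : 'rV[R]_d -> 'rV[R]_d -> R)
  (rho_sym : forall a b, rho a b = rho b a)
  (rho_unit : forall a, rho a a = 1)
  (s : 'I_m -> 'rV[R]_d) (x : 'I_k -> 'rV[R]_d)
  (hm : (1 <= m)%N) (hk : (1 <= k)%N)
  (hpd : posdef (covmx rho (cat_pts s x)))
  (u : 'rV[R]_m) (z : 'rV[R]_k) (hz : z != 0) :
  let Ss := covmx rho s in
  let Sx := covmx rho x in
  let Ssx := crosscov rho s x in
  let mu := z *m (Ssx *m invmx Sx)^T in
  let St := (qform (invmx Sx) z / (k%:R + 1)) *: (Ss - Ssx *m invmx Sx *m Ssx^T) in
  lambda rho (cat_pts s x) (row_mx u z) / lambda rho x z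
  = student_dens (k%:R + 1) mu St u.
Proof.
move=> Ss Sx Ssx mu St.
rewrite covmx_cat_pts // in hpd.
by rewrite /lambda covmx_cat_pts //; exact: (lambda_dens_block_ratio u hpd hz).
Qed.
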